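(* Let $E$ be a finite set of events, each with a timestamp $\tau(e)\in\mathbb{R}$, let $t_w>0$ be a real number and $n\ge 1$ an integer. Let $\mathcal{I}\subseteq 2^E$ consist of all $T\subseteq E$ such that for every $t\in\mathbb{R}$, $|\{e\in T:\tau(e)\in[t,t+t_w)\}|\le n$. Then $(E,\mathcal{I})$ is a $p$-system with $p=2$.
   Context: An independence family $\mathcal{I}\subseteq 2^X$ is a downward-closed family of subsets of $X$. For $Y\subseteq X$, a base of $Y$ is a maximal (with respect to inclusion) set $J\subseteq Y$ with $J\in\mathcal{I}$, i.e. $J\in\mathcal{I}$ and $J\cup\{e\}\notin\mathcal{I}$ for every $e\in Y\setminus J$. $(X,\mathcal{I})$ is a $p$-system if for every $Y\subseteq X$, the maximum cardinality of a base of $Y$ is at most $p$ times the minimum cardinality of a base of $Y$. *)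

From HB Require Import structures.
From mathcomp Require Import all_boot all_order all_algebra.
From mathcomp Require Import reals.
Set Implicit Arguments. Unset Strict Implicit. Unset Printing Implicit Defensive.
Import Order.TTheory GRing.Theory Num.Theory.
Local Open Scope ring_scope.

Definition set_family (X : finType) := {set X} -> Prop.

Definition independence_family (X : finType) (I : set_family X) : Prop :=
  forall A B : {set X}, B \subset A -> I A -> I B.

Definition is_base (X : finType) (I : set_family X) (Y J : {set X}) : Prop :=
  [/\ J \subset Y, I J & forall e, e \in Y -> e \notin J -> ~ I (e |: J)].

Definition p_system (X : finType) (p : nat) (I : set_family X) : Prop :=
  independence_family I /\
  forall Y J1 J2 : {set X}, is_base I Y J1 -> is_base I Y J2 ->
    (#|J1| <= p * #|J2|)%N.

Definition window_family (R : realType) (E : finType) (tau : E -> R)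
  (tw : R) (n : nat) : set_family E :=
  fun T => forall t : R,
    leq #|[set e in T | (t <= tau e) && (tau e < t + tw)]| n.

(* A family is k-extendible if, whenever A is contained in an independent set B and A + e is
   independent, deleting at most k elements of B \ A makes room for e; for a base J and an
   independent B of the same ground set, repeatedly trading the elements of J \ B into B this way
   gives |B \ J| <= k |J \ B|, hence every k-extendible family is a k-system.
   The window family is 2-extendible: adding e to B can only overfill windows around tau e, and
   every such window already meets B \ A in the element of B \ A closest to tau e on the left or
   on the right; removing these two elements of B \ A is therefore enough. *)
From HB Require Import structures.
From mathcomp Require Import all_boot all_order all_algebra.
From mathcomp Require Import reals.
From mathcomp Require Import zify lra.
Import Order.TTheory GRing.Theory Num.Theory.
Set Implicit Arguments. Unset Strict Implicit. Unset Printing Implicit Defensive.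
Local Open Scope ring_scope.

Definition extendible (X : finType) (k : nat) (I : set_family X) : Prop :=
  forall (A B : {set X}) (e : X), A \subset B -> I B -> I (e |: A) ->
    exists2 Z : {set X}, Z \subset B :\: A & (#|Z| <= k)%N /\ I (e |: (B :\: Z)).

Section ExtendibleSystem.
Variables (X : finType) (k : nat) (I : set_family X).
Hypotheses (I_down : independence_family I) (I_ext : extendible k I).

Lemma extendible_card_setD (Y J B : {set X}) : is_base I Y J -> I B -> B \subset Y ->
  (#|B :\: J| <= k * #|J :\: B|)%N.
Proof.
case=> sJY IJ maxJ; move Hm: #|J :\: B| => m.
elim: m B Hm => [|m IH] B Hm IB sBY.
  have sJB : J \subset B by rewrite -setD_eq0 -cards_eq0 Hm.
  rewrite muln0 leqn0 cards_eq0; apply/eqP/setP => x; rewrite !inE.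
  apply/negP => /andP [xJ xB]; apply: (maxJ x _ xJ); first exact: subsetP sBY x xB.
  by apply: I_down IB; rewrite subUset sub1set xB.
have /set0Pn [e eJB] : J :\: B != set0 by rewrite -card_gt0 Hm.
have IeA : I (e |: (J :&: B)).
  by apply: I_down IJ; rewrite subUset sub1set subsetIl andbT; case/setDP: eJB.
have [Z sZ [cZ IB']] := I_ext (subsetIr J B) IB IeA.
rewrite setDIr setDv setU0 in sZ.
have ZJ x : x \in Z -> x \notin J by move/(subsetP sZ); case/setDP.
have eJ : e \in J by case/setDP: eJB.
have JB' : J :\: (e |: (B :\: Z)) = (J :\: B) :\ e.
  apply/setP => x; rewrite !inE; case xJ: (x \in J); rewrite ?andbF //=.
  have -> : x \notin Z by apply/negP => /ZJ; rewrite xJ.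
  by rewrite negb_or !andbT.
have B'J : (e |: (B :\: Z)) :\: J = (B :\: J) :\: Z.
  apply/setP => x; rewrite !inE; case: (eqVneq x e) => [->|_]; first by rewrite eJ !andbF.
  by rewrite andbCA.
have sB'Y : e |: (B :\: Z) \subset Y.
  by rewrite subUset sub1set (subsetP sJY) //= (subset_trans (subsetDl B Z)).
have cJB' : #|(J :\: B) :\ e| = m.
  by apply: succn_inj; rewrite -Hm (cardsD1 e (J :\: B)) eJB.
have := IH (e |: (B :\: Z)); rewrite JB' B'J => /(_ cJB' IB' sB'Y).
have := cardsID Z (B :\: J).
have : (#|(B :\: J) :&: Z| <= #|Z|)%N by apply/subset_leq_card/subsetIr.
lia.
Qed.

Hypothesis k_gt0 : (0 < k)%N.

Lemma extendible_p_system : p_system k I.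
Proof.
split=> // Y J1 J2 b1 b2; have [sJ1Y IJ1 _] := b1.
have := extendible_card_setD b2 IJ1 sJ1Y.
have := cardsID J2 J1; have := cardsID J1 J2; rewrite setIC.
nia.
Qed.

End ExtendibleSystem.

Lemma exists_max_witness (d : Order.disp_t) (T : orderType d) (X : finType)
    (f : X -> T) (L : {set X}) :
  exists2 Z : {set X}, Z \subset L &
    (#|Z| <= 1)%N /\ forall b, b \in L -> exists2 z, z \in Z & (f b <= f z)%O.
Proof.
have [->|[x xL]] := set_0Vmem L.
  by exists set0; rewrite ?sub0set //; split=> [|b]; rewrite ?cards0 ?inE.
case: (arg_maxP f xL) => z zL zmax.
exists [set z]; rewrite ?sub1set //; split=> [|b bL]; first by rewrite cards1.
by exists z; rewrite ?inE //; apply: zmax.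
Qed.

Lemma exists_closest_pair (d : Order.disp_t) (T : orderType d) (X : finType)
    (f : X -> T) (c : T) (L : {set X}) :
  exists2 Z : {set X}, Z \subset L & (#|Z| <= 2)%N /\
    forall b, b \in L -> exists2 z, z \in Z & ((f b <= f z <= c) || (c <= f z <= f b))%O.
Proof.
have [Zl sZl [cZl Zlmax]] := exists_max_witness f [set b in L | f b <= c]%O.
have [Zr sZr [cZr Zrmin]] := exists_max_witness (f : X -> T^d) [set b in L | c <= f b]%O.
exists (Zl :|: Zr).
  apply/subsetP => x /setUP [/(subsetP sZl) | /(subsetP sZr)];
  by rewrite inE => /andP [].
split=> [|b bL]; first exact: leq_trans (leq_card_setU _ _) (leq_add cZl cZr).
have [fbc|cfb] := leP (f b) c.
  have [|z zZl fbz] := Zlmax b; first by rewrite inE bL fbc.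
  have := subsetP sZl z zZl; rewrite inE => /andP [_ fzc].
  by exists z; rewrite ?inE ?zZl ?fbz ?fzc.
have [|z zZr fzb] := Zrmin b; first by rewrite inE bL ltW.
have := subsetP sZr z zZr; rewrite inE => /andP [_ cfz].
rewrite leEdual in fzb.
by exists z; rewrite ?inE ?zZr ?orbT // cfz fzb orbT.
Qed.

Section WindowFamily.
Variables (R : realType) (E : finType) (tau : E -> R) (tw : R) (n : nat).

Definition in_window (t : R) (x : E) : bool := (t <= tau x) && (tau x < t + tw).

Definition window (t : R) (S : {set E}) : {set E} := [set x in S | in_window t x].

Local Notation WF := (window_family tau tw n).

Lemma card_window (S : {set E}) (t : R) : WF S -> (#|window t S| <= n)%N.
Proof. exact. Qed.

Lemma windowS (t : R) (S S' : {set E}) : S \subset S' -> window t S \subset window t S'.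
Proof.
by move=> sSS'; apply/subsetP => x; rewrite !inE => /andP [/(subsetP sSS') -> ->].
Qed.

Lemma window_family_down : independence_family WF.
Proof.
by move=> A B sBA IA t; apply: leq_trans (subset_leq_card (windowS t sBA)) (card_window t IA).
Qed.

Lemma in_window_between (t : R) (a b x : E) : in_window t a -> in_window t b ->
  (tau a <= tau x <= tau b) || (tau b <= tau x <= tau a) -> in_window t x.
Proof.
rewrite /in_window => /andP [? ?] /andP [? ?] /orP [] /andP [? ?];
by apply/andP; split; lra.
Qed.

Lemma window_family_extendible : extendible 2 WF.
Proof.
move=> A B e _ IB IeA.
have [Z sZ [cZ Zclose]] := exists_closest_pair tau (tau e) (B :\: A).
exists Z => //; split=> // t; change (#|window t (e |: (B :\: Z))| <= n)%N.
have [noBA|[b bBA]] := set_0Vmem (window t (B :\: A)).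
  apply: leq_trans (card_window t IeA); apply: subset_leq_card; apply/subsetP => x.
  rewrite !inE => /andP [/orP [->//|/andP [_ xB]] xw]; rewrite xw andbT.
  apply/orP; right; apply: contraT => xA.
  by move/setP/(_ x): noBA; rewrite !inE xA xB xw.
have [eW|eNW] := boolP (in_window t e); last first.
  apply: leq_trans (card_window t IB); apply: subset_leq_card; apply/subsetP => x.
  rewrite !inE => /andP [/orP [/eqP ->|/andP [_ ->//]] eW].
  by rewrite eW in eNW.
move: bBA; rewrite inE => /andP [bBA bW].
have [z zZ zb] := Zclose b bBA.
have zW : z \in window t B.
  have := subsetP sZ z zZ; rewrite !inE => /andP [_ ->] /=.
  exact: in_window_between bW eW zb.
apply: leq_trans (card_window t IB).
rewrite (cardsD1 z (window t B)) zW.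
apply: leq_trans (subset_leq_card (_ : _ \subset e |: (window t B :\ z))) _.
  apply/subsetP => x; rewrite !inE => /andP [/orP [->//|/andP [xZ xB]] xw].
  by rewrite xB xw !andbT; apply/orP; right; apply: contraNneq xZ => ->.
by rewrite cardsU1 leq_add2r leq_b1.
Qed.

End WindowFamily.

Theorem theorem2 (R : realType) (E : finType) (tau : E -> R) (tw : R) (n : nat) :
  0 < tw -> (1 <= n)%N -> p_system 2 (window_family tau tw n).
Proof.
move=> _ _.
exact: extendible_p_system (@window_family_down R E tau tw n)
  (@window_family_extendible R E tau tw n) isT.
Qed.
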